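(* For every integer $n\ge2$ and every integer $s\ge0$ with $2^s\le n$, the polynomial $1+x^{2^s}$ does not divide $\operatorname{num}_{\mathcal B}(n,x)$ in $\mathbb{Z}[x]$. Consequently, for every $n\ge1$, $\gcd(\operatorname{num}_{\mathcal B}(n,x),\operatorname{den}_{\mathcal B}(n,x))=1$.
   Context: A binary partition of $n$ is a partition of $n$ (finite nonincreasing sequence of positive integers summing to $n$) all of whose parts are powers of $2$ (including $1$); $\mathcal B(n)$ denotes the set of binary partitions of $n$, and $m_\lambda(i)$ the number of parts of $\lambda$ equal to $i$. For $\lambda\in\mathcal B(n)$ let $h_{\mathcal B,\lambda}(x)=\prod_{k\ge0}(1+x^{2^k})^{\lfloor n/2^k\rfloor-m_\lambda(2^k)}$. Let $G_{\mathcal B}(n,x)=\gcd\{h_{\mathcal B,\lambda}(x):\lambda\in\mathcal B(n)\}$ in $\mathbb{Z}[x]$ (normalized with positive leading coefficient), and $$\operatorname{num}_{\mathcal B}(n,x)=\frac{1}{G_{\mathcal B}(n,x)}\sum_{\lambda\in\mathcal B(n)}h_{\mathcal B,\lambda}(x),\qquad \operatorname{den}_{\mathcal B}(n,x)=\frac{\prod_{k\ge0}(1+x^{2^k})^{\lfloor n/2^k\rfloor}}{G_{\mathcal B}(n,x)}.$$ *)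

From HB Require Import structures.
From mathcomp Require Import all_boot all_order all_algebra.
Set Implicit Arguments. Unset Strict Implicit. Unset Printing Implicit Defensive.
Import GRing.Theory Num.Theory.
Local Open Scope ring_scope.

Definition is_pow2 (i : nat) : bool := [exists k : 'I_i.+1, i == (2 ^ k)%N].

(* A partition of n is encoded as an n-tuple of entries in {0..n}, nonincreasing,
   padded with zeros (a partition of n has at most n parts, each <= n).
   The parts are the nonzero entries. *)
Definition parts (n : nat) (t : n.-tuple 'I_n.+1) : seq nat := map val t.

Definition is_bin_part (n : nat) (t : n.-tuple 'I_n.+1) : bool :=
  [&& sorted geq (parts t),
      all (fun i => (i == 0%N) || is_pow2 i) (parts t)
    & sumn (parts t) == n].

Definition mult (n : nat) (t : n.-tuple 'I_n.+1) (i : nat) : nat :=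
  count_mem i (parts t).

(* h_{B,lambda}(x) = prod_{k>=0} (1 + x^{2^k})^(floor(n/2^k) - m_lambda(2^k));
   factors with k > n are trivial (exponent 0). *)
Definition hB (n : nat) (t : n.-tuple 'I_n.+1) : {poly int} :=
  \prod_(k < n.+1) (1 + 'X^(2 ^ k)) ^+ (n %/ 2 ^ k - mult t (2 ^ k))%N.

Definition fullB (n : nat) : {poly int} :=
  \prod_(k < n.+1) (1 + 'X^(2 ^ k)) ^+ (n %/ 2 ^ k)%N.

Definition sumB (n : nat) : {poly int} :=
  \sum_(t : n.-tuple 'I_n.+1 | is_bin_part t) hB t.

Definition dvdZ (p q : {poly int}) : Prop := exists r : {poly int}, q = r * p.

Definition is_GB (n : nat) (G : {poly int}) : Prop :=
  [/\ 0 < lead_coef G,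
      (forall t : n.-tuple 'I_n.+1, is_bin_part t -> dvdZ G (hB t))
    & (forall d : {poly int},
         (forall t : n.-tuple 'I_n.+1, is_bin_part t -> dvdZ d (hB t)) -> dvdZ d G)].

From mathcomp Require Import all_boot all_order all_algebra all_field.
From mathcomp Require Import zify ring.
Import GRing.Theory Num.Theory.
Set Implicit Arguments. Unset Strict Implicit.

(* Let e_k be the exponent of 1 + x^(2^k) in h_lambda, and let zeta = omega^2
   where omega + 1/omega = 2 cos(pi / 2^(s+1)), so that zeta is a primitive
   2^(s+1)-th root of unity. For k <= s we have
   1 + zeta^(2^k) = omega^(2^k) * 2 cos(pi / 2^(s+1-k)), and for k > s the
   factor is 2. Hence h_lambda(zeta) is omega^(sum_(k <= s) 2^k e_k) times a
   nonnegative real. It vanishes unless e_s = 0, and then the parts of lambda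
   not exceeding 2^s already sum to n, which makes sum_(k <= s) 2^k e_k
   independent of lambda. So all the terms of sum_lambda h_lambda(zeta) lie on
   one ray, and the partition into floor(n/2^s) parts 2^s and ones contributes
   a nonzero term. Being over Z, the sum does not vanish at any Galois
   conjugate of zeta either, i.e. at any root of 1 + x^(2^s). Every root of
   den_B is such a root for some 2^s <= n, whence both claims. *)

Section BinaryPartitions.
Local Open Scope nat_scope.

Lemma is_pow2P x : reflect (exists j, x = 2 ^ j) (is_pow2 x).
Proof.
apply: (iffP existsP) => [[k /eqP ->]|[j ->]]; first by exists k.
have lt_j : j < (2 ^ j).+1 by rewrite ltnS ltnW // ltn_expl.
by exists (Ordinal lt_j).
Qed.

Lemma exp2_le_ltnS n s : 2 ^ s <= n -> s < n.+1.
Proof. by move=> le_2s_n; rewrite ltnS (leq_trans _ le_2s_n) // ltnW // ltn_expl. Qed.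

Lemma sum_exp2_count_mem n (l : seq nat) :
  all (fun x => (x < n.+1) && ((x == 0) || is_pow2 x)) l ->
  \sum_(k < n.+1) 2 ^ k * count_mem (2 ^ k) l = sumn l.
Proof.
elim: l => [|x l IHl] /=; first by move=> _; apply: big1 => k _; rewrite muln0.
case/andP => /andP [lt_x_n x_pow2] /IHl <-.
under eq_bigr do rewrite mulnDr.
rewrite big_split /=; congr (_ + _).
case/orP: x_pow2 lt_x_n => [/eqP -> _|/is_pow2P [j ->] lt_2j_n].
  by apply: big1 => k _; rewrite eq_sym expn_eq0 muln0.
have lt_j : j < n.+1 by apply: exp2_le_ltnS; rewrite -ltnS.
rewrite (bigD1 (Ordinal lt_j)) //= eqxx muln1 big1 ?addn0 // => k.
by rewrite -val_eqE /= eqn_exp2l // eq_sym => /negbTE ->; rewrite muln0.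
Qed.

Variables (n : nat) (t : n.-tuple 'I_n.+1).
Hypothesis t_bin : is_bin_part t.

Lemma bin_part_sum : \sum_(k < n.+1) 2 ^ k * mult t (2 ^ k) = n.
Proof.
case/and3P: t_bin => _ t_pow2 /eqP sum_t; rewrite /mult sum_exp2_count_mem ?sum_t //.
apply/allP => x x_t; rewrite (allP t_pow2) // andbT.
by case/mapP: x_t => y _ ->; apply: ltn_ord.
Qed.

Lemma bin_part_mult_le (k : 'I_n.+1) : mult t (2 ^ k) <= n %/ 2 ^ k.
Proof.
rewrite leq_divRL ?expn_gt0 // mulnC -[X in _ <= X]bin_part_sum.
by rewrite (bigD1 k) //= leq_addr.
Qed.

(* Parts larger than 2^s sum to a multiple of 2^(s+1), and by assumption
   less than 2^s remains for them. *)
Lemma bin_part_low_sum (s : 'I_n.+1) : n %/ 2 ^ s <= mult t (2 ^ s) ->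
  \sum_(k < n.+1 | k <= s) 2 ^ k * mult t (2 ^ k) = n.
Proof.
move=> le_q_ms; have := bin_part_sum; rewrite (bigID (fun k : 'I_n.+1 => k <= s)) /=.
set low := \sum_(k < n.+1 | k <= s) _; set high := \sum_(k < n.+1 | ~~ (k <= s)) _.
have dvd_high : 2 ^ s.+1 %| high.
  apply: dvdn_sum => k; rewrite -ltnNge => lt_s_k.
  by rewrite dvdn_mulr // dvdn_exp2l.
have ge_low : 2 ^ s * (n %/ 2 ^ s) <= low.
  apply: leq_trans (_ : 2 ^ s * mult t (2 ^ s) <= low).
    by rewrite leq_mul2l le_q_ms orbT.
  by rewrite /low (bigD1 s) //= leq_addr.
have := divn_eq n (2 ^ s); have := ltn_pmod n (expn_gt0 2 s).
have [-> | pos_high] := posnP high; first by rewrite addn0.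
have := dvdn_leq pos_high dvd_high; rewrite expnS; lia.
Qed.

End BinaryPartitions.

Definition hB_exp n (t : n.-tuple 'I_n.+1) k := n %/ 2 ^ k - mult t (2 ^ k).

Lemma hB_exp_low_sum n (t : n.-tuple 'I_n.+1) (s : 'I_n.+1) :
  is_bin_part t -> hB_exp t s = 0 ->
  \sum_(k < n.+1 | k <= s) 2 ^ k * hB_exp t k + n =
  \sum_(k < n.+1 | k <= s) 2 ^ k * (n %/ 2 ^ k).
Proof.
move=> t_bin /eqP; rewrite subn_eq0 => /(bin_part_low_sum t_bin) low_sum.
rewrite -[X in _ + X = _]low_sum -big_split; apply: eq_bigr => k _ /=.
by rewrite -mulnDr subnK // bin_part_mult_le.
Qed.

Section Pow2OnesPartition.
Local Open Scope nat_scope.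

Lemma sorted_geq_nseq_cat a x (l : seq nat) :
  sorted geq l -> all (geq x) l -> sorted geq (nseq a x ++ l).
Proof.
have geq_trans : transitive geq by move=> y x' z le_x'y le_zx'; apply: leq_trans le_zx' le_x'y.
move=> sorted_l le_l_x; elim: a => [|a IHa] //=.
by rewrite (path_sortedE geq_trans) IHa andbT all_cat all_nseq /= leqnn orbT.
Qed.

Variables (n s : nat).
Hypothesis le_2s_n : 2 ^ s <= n.

Definition pow2_ones_seq :=
  nseq (n %/ 2 ^ s) (2 ^ s) ++ nseq (n %% 2 ^ s) 1 ++ nseq (n - n %/ 2 ^ s - n %% 2 ^ s) 0.

Lemma mem_pow2_ones_seq_le x : x \in pow2_ones_seq -> x <= n.
Proof.
rewrite !mem_cat => /or3P [] /nseqP [-> _] //.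
by rewrite (leq_trans _ le_2s_n) ?expn_gt0.
Qed.

Lemma size_pow2_ones_seq : size (map (@inord n) pow2_ones_seq) == n.
Proof.
rewrite size_map !size_cat !size_nseq; apply/eqP.
have := divn_eq n (2 ^ s); have : n %/ 2 ^ s <= n %/ 2 ^ s * 2 ^ s.
  by rewrite leq_pmulr ?expn_gt0.
lia.
Qed.

Definition pow2_ones_part : n.-tuple 'I_n.+1 := Tuple size_pow2_ones_seq.

Lemma parts_pow2_ones_part : parts pow2_ones_part = pow2_ones_seq.
Proof.
rewrite /parts /= -map_comp -[RHS]map_id.
by apply/eq_in_map => x /mem_pow2_ones_seq_le le_x_n /=; rewrite inordK.
Qed.

Lemma pow2_ones_part_bin : is_bin_part pow2_ones_part.
Proof.
rewrite /is_bin_part parts_pow2_ones_part; apply/and3P; split.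
- apply: sorted_geq_nseq_cat.
    by rewrite sorted_geq_nseq_cat ?all_nseq ?orbT // -[nseq _ 0]cats0 sorted_geq_nseq_cat.
  by rewrite all_cat !all_nseq /= expn_gt0 !orbT.
- rewrite !all_cat; apply/and3P; split; apply/allP => y /nseqP [-> _] //.
  + by apply/orP; right; apply/is_pow2P; exists s.
  + by apply/orP; right; apply/is_pow2P; exists 0.
- rewrite !sumn_cat !sumn_nseq /=; apply/eqP.
  have := divn_eq n (2 ^ s); lia.
Qed.

Lemma hB_exp_pow2_ones_part : hB_exp pow2_ones_part s = 0.
Proof.
rewrite /hB_exp /mult parts_pow2_ones_part !count_cat !count_nseq /= eqxx.
by apply/eqP; rewrite subn_eq0 mul1n leq_addr.
Qed.

End Pow2OnesPartition.

Local Open Scope ring_scope.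

Section SymPow2.
Variables (F : fieldType) (w : F).
Hypothesis w_neq0 : w != 0.

Definition sym_pow2 k := w ^+ (2 ^ k) + w^-1 ^+ (2 ^ k).

Lemma mul_exp2_inv k : w ^+ (2 ^ k) * w^-1 ^+ (2 ^ k) = 1.
Proof. by rewrite -exprMn mulfV // expr1n. Qed.

Lemma sym_pow2S k : sym_pow2 k.+1 = sym_pow2 k ^+ 2 - 2.
Proof. by rewrite /sym_pow2 expnSr !exprM sqrrD mul_exp2_inv; ring. Qed.

Lemma add1_exp2S k : 1 + w ^+ (2 ^ k.+1) = w ^+ (2 ^ k) * sym_pow2 k.
Proof.
by rewrite /sym_pow2 mulrDr mul_exp2_inv -exprD addnn -mul2n -expnS addrC.
Qed.

End SymPow2.

(* dcos j = 2 cos(pi / 2^(j+1)), by the half-angle formula. *)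
Fixpoint dcos (j : nat) : algC := if j is j'.+1 then sqrtC (2 + dcos j') else 0.

Lemma dcos_ge0 j : 0 <= dcos j.
Proof. by elim: j => [|j IHj] //=; rewrite sqrtC_ge0 addr_ge0. Qed.

Lemma dcosS_gt0 j : 0 < dcos j.+1.
Proof. by rewrite /= sqrtC_gt0 ltr_pwDl ?dcos_ge0. Qed.

Lemma sqr_dcosS j : dcos j.+1 ^+ 2 = 2 + dcos j.
Proof. by rewrite /= sqrtCK. Qed.

Section Zeta.
Variable s : nat.

Definition omega : algC := (dcos s + sqrtC (dcos s ^+ 2 - 4)) / 2.

Lemma omega_root : omega ^+ 2 + 1 = dcos s * omega.
Proof.
have sqr_disc : sqrtC (dcos s ^+ 2 - 4) ^+ 2 = dcos s ^+ 2 - 4 by rewrite sqrtCK.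
apply/eqP; rewrite -subr_eq0; apply/eqP.
transitivity ((sqrtC (dcos s ^+ 2 - 4) ^+ 2 - (dcos s ^+ 2 - 4)) / 4).
  by rewrite /omega; field.
by rewrite sqr_disc subrr mul0r.
Qed.

Lemma omega_neq0 : omega != 0.
Proof.
apply/eqP => omega0; have := omega_root.
by rewrite omega0 expr0n /= add0r mulr0 => /eqP; rewrite oner_eq0.
Qed.

Lemma sym_pow2_omega k : (k <= s)%N -> sym_pow2 omega k = dcos (s - k).
Proof.
elim: k => [|k IHk] le_ks.
  rewrite subn0 /sym_pow2 !expr1; apply: (mulfI omega_neq0).
  by rewrite mulrDr mulfV ?omega_neq0 // -expr2 omega_root mulrC.
by rewrite sym_pow2S ?omega_neq0 // IHk ?(ltnW le_ks) // -subnSK // sqr_dcosS; ring.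
Qed.

Definition zeta := omega ^+ 2.

Lemma zeta_exp2 k : zeta ^+ (2 ^ k) = omega ^+ (2 ^ k.+1).
Proof. by rewrite -exprM -expnS. Qed.

Lemma add1_zeta_exp2 k : (k <= s)%N -> 1 + zeta ^+ (2 ^ k) = omega ^+ (2 ^ k) * dcos (s - k).
Proof. by move=> le_ks; rewrite zeta_exp2 (add1_exp2S omega_neq0) sym_pow2_omega. Qed.

Lemma zeta_exp2_s : zeta ^+ (2 ^ s) = -1.
Proof. by apply/eqP; rewrite -addr_eq0 addrC add1_zeta_exp2 // subnn mulr0. Qed.

Lemma zeta_exp2_gt k : (s < k)%N -> zeta ^+ (2 ^ k) = 1.
Proof.
move=> lt_sk; have -> : (2 ^ k = 2 ^ s * 2 ^ (k - s))%N by rewrite -expnD; congr (_ ^ _)%N; lia.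
by rewrite exprM zeta_exp2_s -signr_odd oddX /= subn_eq0 leqNgt lt_sk.
Qed.

End Zeta.

Definition ev (z : algC) (p : {poly int}) : algC := (map_poly intr p).[z].

Lemma evM z p q : ev z (p * q) = ev z p * ev z q.
Proof. by rewrite /ev rmorphM hornerM. Qed.

Lemma ev_add1Xn z m : ev z (1 + 'X^m) = 1 + z ^+ m.
Proof. by rewrite /ev rmorphD rmorph1 /= map_polyXn hornerD hornerC hornerXn. Qed.

Lemma ev_prod_exp z n (e : 'I_n.+1 -> nat) :
  ev z (\prod_(k < n.+1) (1 + 'X^(2 ^ k)) ^+ e k) = \prod_(k < n.+1) (1 + z ^+ (2 ^ k)) ^+ e k.
Proof.
rewrite /ev rmorph_prod horner_prod; apply: eq_bigr => k _.
by rewrite rmorphXn horner_exp -/(ev _ _) ev_add1Xn.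
Qed.

Lemma ev_hB z n (t : n.-tuple 'I_n.+1) :
  ev z (hB t) = \prod_(k < n.+1) (1 + z ^+ (2 ^ k)) ^+ hB_exp t k.
Proof. exact: ev_prod_exp. Qed.

Lemma ev_sumB z n : ev z (sumB n) = \sum_(t : n.-tuple 'I_n.+1 | is_bin_part t) ev z (hB t).
Proof. by rewrite /ev /sumB rmorph_sum horner_sum. Qed.

Lemma ev_fullB z n : ev z (fullB n) = \prod_(k < n.+1) (1 + z ^+ (2 ^ k)) ^+ (n %/ 2 ^ k).
Proof. exact: ev_prod_exp. Qed.

Section SumBAtZeta.
Variables (n s : nat).
Hypothesis le_2s_n : (2 ^ s <= n)%N.

Definition s_ord : 'I_n.+1 := Ordinal (exp2_le_ltnS le_2s_n).

Definition zeta_modulus (t : n.-tuple 'I_n.+1) (k : 'I_n.+1) : algC :=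
  (if (k <= s)%N then dcos (s - k) else 2) ^+ hB_exp t k.

Definition zeta_arg := (\sum_(k < n.+1 | (k <= s)%N) 2 ^ k * (n %/ 2 ^ k) - n)%N.

Lemma zeta_modulus_ge0 t k : 0 <= zeta_modulus t k.
Proof. by rewrite exprn_ge0 //; case: ifP => _; rewrite ?dcos_ge0. Qed.

Lemma ev_hB_zeta t : is_bin_part t ->
  ev (zeta s) (hB t) = omega s ^+ zeta_arg * \prod_(k < n.+1) zeta_modulus t k.
Proof.
move=> t_bin; rewrite ev_hB.
have factor (k : 'I_n.+1) : (1 + zeta s ^+ (2 ^ k)) ^+ hB_exp t k =
    omega s ^+ (if (k <= s)%N then 2 ^ k * hB_exp t k else 0)%N * zeta_modulus t k.
  rewrite /zeta_modulus; case: ifPn => [le_ks | /negbTE gt_ks].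
    by rewrite add1_zeta_exp2 // exprMn exprM.
  by rewrite zeta_exp2_gt ?ltnNge ?gt_ks // expr0 mul1r.
rewrite (eq_bigr _ (fun k _ => factor k)) big_split /= prodrXr -big_mkcond /=.
have [exp_s0 | exp_s_gt0] := posnP (hB_exp t s_ord).
  by rewrite /zeta_arg -(hB_exp_low_sum t_bin exp_s0) addnK.
suff -> : \prod_(k < n.+1) zeta_modulus t k = 0 by rewrite !mulr0.
by rewrite (bigD1 s_ord) //= /zeta_modulus leqnn subnn expr0n gtn_eqF // mul0r.
Qed.

Lemma ev_sumB_zeta_neq0 : ev (zeta s) (sumB n) != 0.
Proof.
rewrite ev_sumB (eq_bigr _ (fun t t_bin => ev_hB_zeta t_bin)) -mulr_sumr.
rewrite mulf_neq0 ?expf_neq0 ?omega_neq0 // lt0r_neq0 //.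
rewrite (bigD1 (pow2_ones_part le_2s_n)) ?pow2_ones_part_bin //=.
rewrite ltr_pwDl ?sumr_ge0 // => [|t _]; last first.
  by rewrite prodr_ge0 // => k _; apply: zeta_modulus_ge0.
apply: prodr_gt0 => k _; rewrite /zeta_modulus.
case: ltngtP => [lt_ks | lt_sk | eq_ks].
- by rewrite exprn_gt0 // -(subnSK lt_ks) dcosS_gt0.
- by rewrite exprn_gt0 ?ltr0n.
- have -> : k = s_ord by apply: val_inj.
  by rewrite hB_exp_pow2_ones_part expr0 ltr01.
Qed.

End SumBAtZeta.

Lemma prim_root_exp2_neg1 s (z : algC) : z ^+ (2 ^ s) = -1 -> (2 ^ s.+1)%N.-primitive_root z.
Proof.
move=> z_neg1; have z_unity : z ^+ (2 ^ s.+1) = 1 by rewrite expnSr exprM z_neg1 sqrrN expr1n.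
have [m prim_z] := prim_order_exists (expn_gt0 2 s.+1) z_unity.
case/(dvdn_pfactor _ _ (isT : prime 2)) => j le_j_sS m_2j; rewrite m_2j in prim_z.
have [lt_j_sS | | eq_j] := ltngtP j s.+1; last by rewrite -eq_j.
- have : z ^+ (2 ^ s) = 1.
    rewrite -(subnK (lt_j_sS : (j <= s)%N)) expnD mulnC exprM.
    by rewrite (UnityRootTheory.prim_expr_order prim_z) expr1n.
  by rewrite z_neg1 => /eqP; rewrite eq_sym -subr_eq0 opprK -[1 + 1]/(2%:R) pnatr_eq0.
- by rewrite ltnNge le_j_sS.
Qed.

(* Galois conjugation: z and w are primitive 2^(s+1)-th roots of unity, so they
   share their minimal polynomial over Q, the cyclotomic polynomial. *)
Lemma ev_eq0_exp2_neg1 s (z w : algC) (p : {poly int}) :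
  z ^+ (2 ^ s) = -1 -> w ^+ (2 ^ s) = -1 -> ev z p = 0 -> ev w p = 0.
Proof.
move=> /prim_root_exp2_neg1 prim_z /prim_root_exp2_neg1 prim_w.
have [pz [min_z _] root_z] := minCpolyP z; have [pw [min_w _] root_w] := minCpolyP w.
have pz_pw : pz = pw.
  apply: (map_poly_inj ratr); apply: etrans (esym min_z) (etrans _ min_w).
  rewrite (minCpoly_cyclotomic prim_z) (minCpoly_cyclotomic prim_w).
  by rewrite -(Cintr_Cyclotomic prim_z) -(Cintr_Cyclotomic prim_w).
have p_rat : map_poly (intr : int -> algC) p = map_poly ratr (map_poly (intr : int -> rat) p).
  by rewrite -map_poly_comp; apply: eq_map_poly => x /=; rewrite rmorph_int.
rewrite /ev p_rat => /eqP root_pz; apply/eqP.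
by rewrite -/(root _ w) root_w -pz_pw -root_z.
Qed.

Lemma sumB_neq0_exp2_neg1 n s (z : algC) :
  (2 ^ s <= n)%N -> z ^+ (2 ^ s) = -1 -> ev z (sumB n) != 0.
Proof.
move=> le_2s_n z_neg1; apply: contra_neq (ev_sumB_zeta_neq0 le_2s_n).
exact: ev_eq0_exp2_neg1 z_neg1 (zeta_exp2_s s).
Qed.

Lemma monic_dvd_size1_unit (R : idomainType) (p q d : {poly R}) :
  p \is monic -> p = q * d -> size d = 1%N -> d \is a GRing.unit.
Proof.
move=> mon_p pE size_d; rewrite poly_unitE size_d eqxx /=.
apply/unitrPr; exists (lead_coef q).
by rewrite -(monicP mon_p) pE lead_coefM mulrC [lead_coef d]lead_coefE size_d.
Qed.

Lemma fullB_monic n : fullB n \is monic.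
Proof.
apply: monic_prod => k _; apply: monic_exp.
by rewrite addrC -polyC1 monicXnaddC // expn_gt0.
Qed.

Lemma sumB_fullB_coprime n (d : {poly int}) :
  dvdZ d (sumB n) -> dvdZ d (fullB n) -> d \is a GRing.unit.
Proof.
move=> [q1 sumBE] [q2 fullBE].
have [size_d1 | size_d_neq1] := eqVneq (size d) 1%N.
  exact: monic_dvd_size1_unit (fullB_monic n) fullBE size_d1.
have [z /eqP d_z] : exists z, root (map_poly (intr : int -> algC) d) z.
  by apply/closed_rootP; rewrite size_map_inj_poly //; apply: intr_inj.
have : ev z (fullB n) = 0 by rewrite fullBE evM [ev z d]d_z mulr0.
rewrite ev_fullB => /eqP /prodf_eq0 [k _].
rewrite expf_eq0 divn_gt0 ?expn_gt0 // addrC addr_eq0 => /andP [le_2k_n /eqP z_neg1].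
have := sumB_neq0_exp2_neg1 le_2k_n z_neg1.
by rewrite sumBE evM [ev z d]d_z mulr0 eqxx.
Qed.

(* num_B(n,x) = N and den_B(n,x) = D are characterized by
   sumB n = G_B(n,x) * N and fullB n = G_B(n,x) * D. *)
Theorem theorem2 :
  (forall (n s : nat), (2 <= n)%N -> (2 ^ s <= n)%N ->
     forall G N : {poly int}, is_GB n G -> sumB n = G * N ->
       ~ dvdZ (1 + 'X^(2 ^ s)) N)
  /\
  (forall n : nat, (1 <= n)%N ->
     forall G N D : {poly int}, is_GB n G -> sumB n = G * N -> fullB n = G * D ->
       forall d : {poly int}, dvdZ d N -> dvdZ d D -> d \is a GRing.unit).
Proof.
split.
  move=> n s _ le_2s_n G N _ sumBE [q NE].
  have := ev_sumB_zeta_neq0 le_2s_n.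
  by rewrite sumBE NE !evM ev_add1Xn zeta_exp2_s subrr !mulr0 eqxx.
move=> n _ G N D _ sumBE fullBE d [q1 NE] [q2 DE].
apply: (@sumB_fullB_coprime n).
  by exists (G * q1); rewrite sumBE NE mulrA.
by exists (G * q2); rewrite fullBE DE mulrA.
Qed.
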